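(* For all runtime type environments $\Delta_1, \Delta_2, \Delta_1'$ such that $\Delta_1,\Delta_2$ and $\Delta_1',\Delta_2$ are defined: if $\mathsf{safe}(\Delta_1, \Delta_2)$ and $\Delta_1 \Longrightarrow \Delta_1'$, then $\mathsf{safe}(\Delta_1', \Delta_2)$.
   Context: Session types: $S ::= \oplus\mathtt{p}\{\ell_i(A_i).S_i\}_{i\in I} \mid \&\mathtt{p}\{\ell_i(A_i).S_i\}_{i\in I} \mid \mu X.S \mid X \mid \mathsf{end}$, where $\mathtt{p},\mathtt{q}$ range over roles, $\ell$ over message labels and $A$ over payload types (compared by syntactic equality). Recursive session types are treated equi-recursively. Queue types are $Q ::= \epsilon \mid (\mathtt{p}\to\mathtt{q} : \ell(A))\cdot Q$, identified up to the congruence $\equiv$ that swaps two adjacent entries $(\mathtt{p}_1\to\mathtt{q}_1:\ell_1(A_1))$ and $(\mathtt{p}_2\to\mathtt{q}_2:\ell_2(A_2))$ whenever $\mathtt{p}_1\neq\mathtt{p}_2$ or $\mathtt{q}_1\neq\mathtt{q}_2$. A runtime type environment $\Delta$ is a finite collection of entries of the forms: actor name $a$; access point name $p$; polarised initialisation token $\iota^{+}:S$ or $\iota^{-}:S$; session endpoint $s[\mathtt{p}]:S$; session queue $s:Q$; each entry's subject occurs at most once, and $\Delta_1,\Delta_2$ denotes disjoint union (defined only when the subjects are disjoint). The congruence $\equiv$ on queue types extends to environments. Labelled transitions on environments ($j\in I$ where applicable): (Send) $\Delta, s[\mathtt{p}]:\oplus\mathtt{q}\{\ell_i(A_i).S_i\}_{i\in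 I}, s:Q \to \Delta, s[\mathtt{p}]:S_j, s:Q\cdot(\mathtt{p}\to\mathtt{q}:\ell_j(A_j))$; (Recv) $\Delta, s[\mathtt{p}]:\&\mathtt{q}\{\ell_i(A_i).S_i\}_{i\in I}, s:(\mathtt{q}\to\mathtt{p}:\ell_j(A_j))\cdot Q \to \Delta, s[\mathtt{p}]:S_j, s:Q$; (End) $\Delta, s[\mathtt{p}]:\mathsf{end} \to \Delta$; (Rec) $\Delta, s[\mathtt{p}]:\mu X.S \to \Delta'$ whenever $\Delta, s[\mathtt{p}]:S\{\mu X.S/X\}\to\Delta'$. Write $\Delta \Longrightarrow \Delta'$ if $\Delta\equiv\Delta_a\to\Delta_b\equiv\Delta'$ for some $\Delta_a,\Delta_b$. The predicate $\mathsf{safe}$ is the largest predicate on environments such that $\mathsf{safe}(\Delta)$ implies: (i) if $\Delta=\Delta_0, s[\mathtt{p}]:\&\mathtt{q}\{\ell_i(A_i).S_i\}_{i\in I}, s:Q$ with $Q\equiv(\mathtt{q}\to\mathtt{p}:\ell_j(B_j))\cdot Q'$, then $j\in I$ and $B_j=A_j$; (ii) if $\Delta=\Delta_0, s[\mathtt{p}]:\mu X.S$ then $\mathsf{safe}(\Delta_0, s[\mathtt{p}]:S\{\mu X.S/X\})$; (iii) if $\Delta\Longrightarrow\Delta'$ then $\mathsf{safe}(\Delta')$. *)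

From Stdlib Require Import List Arith Relations.
Import ListNotations.

Set Implicit Arguments.

Section Env.

(* Roles, message labels, payload types (compared by syntactic = Leibniz
   equality), actor names, access point names, initialisation tokens and
   session names are arbitrary types. *)
Variables (Role Label Pay Actor AP Tok Sess : Type).

(* Session types, with de Bruijn indices for recursion variables:
   [Mu S] binds index 0 in [S].  A branch {l_i(A_i).S_i}_{i in I} is the
   list of triples (l_i, A_i, S_i). *)
Inductive stype : Type :=
| Sel : Role -> list (Label * Pay * stype) -> stype
| Bra : Role -> list (Label * Pay * stype) -> stype
| Mu  : stype -> stype
| Var : nat -> stype
| End : stype.

Fixpoint lift (c : nat) (S : stype) : stype :=
  match S with
  | Sel q bs => Sel q (map (fun b => match b with (la, S') => (la, lift c S') end) bs)
  | Bra q bs => Bra q (map (fun b => match b with (la, S') => (la, lift c S') end) bs)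
  | Mu S' => Mu (lift (Datatypes.S c) S')
  | Var n => if n <? c then Var n else Var (Datatypes.S n)
  | End => End
  end.

Fixpoint subst (k : nat) (U : stype) (S : stype) : stype :=
  match S with
  | Sel q bs => Sel q (map (fun b => match b with (la, S') => (la, subst k U S') end) bs)
  | Bra q bs => Bra q (map (fun b => match b with (la, S') => (la, subst k U S') end) bs)
  | Mu S' => Mu (subst (Datatypes.S k) (lift 0 U) S')
  | Var n => if n =? k then U else if k <? n then Var (pred n) else Var n
  | End => End
  end.

(* S{mu X.S / X}, the one-step unfolding of mu X.S. *)
Definition unfold (S : stype) : stype := subst 0 (Mu S) S.

Record msg : Type := Msg { sender : Role; receiver : Role; mlabel : Label; mpay : Pay }.

Definition qtype := list msg.

Inductive qswap : qtype -> qtype -> Prop :=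
| QSwap : forall Q1 Q2 m1 m2,
    sender m1 <> sender m2 \/ receiver m1 <> receiver m2 ->
    qswap (Q1 ++ m1 :: m2 :: Q2) (Q1 ++ m2 :: m1 :: Q2).

Definition qcong : qtype -> qtype -> Prop := clos_refl_sym_trans qtype qswap.

Inductive subject : Type :=
| SActor : Actor -> subject
| SAP : AP -> subject
| STokP : Tok -> subject
| STokM : Tok -> subject
| SEP : Sess -> Role -> subject
| SQ : Sess -> subject.

Inductive entry : Type :=
| EName : entry
| ESess : stype -> entry
| EQueue : qtype -> entry.

Definition env := subject -> option entry.

Definition env_finite (D : env) : Prop :=
  exists l : list subject, forall x, D x <> None -> In x l.

Definition kind_ok (x : subject) (e : entry) : Prop :=
  match x, e with
  | SActor _, EName => True
  | SAP _, EName => True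
  | STokP _, ESess _ => True
  | STokM _, ESess _ => True
  | SEP _ _, ESess _ => True
  | SQ _, EQueue _ => True
  | _, _ => False
  end.

Definition is_env (D : env) : Prop :=
  env_finite D /\ forall x e, D x = Some e -> kind_ok x e.

(* Disjoint union D1, D2 (defined when subjects are disjoint). *)
Definition env_disjoint (D1 D2 : env) : Prop :=
  forall x, D1 x = None \/ D2 x = None.

Definition env_union (D1 D2 : env) : env :=
  fun x => match D1 x with Some e => Some e | None => D2 x end.

Inductive entry_equiv : option entry -> option entry -> Prop :=
| EqNone : entry_equiv None None
| EqSame : forall e, entry_equiv (Some e) (Some e)
| EqQueue : forall Q Q', qcong Q Q' ->
    entry_equiv (Some (EQueue Q)) (Some (EQueue Q')).

Definition env_equiv (D D' : env) : Prop := forall x, entry_equiv (D x) (D' x).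

Definition agree_except (xs : list subject) (D D' : env) : Prop :=
  forall y, ~ In y xs -> D' y = D y.

(* Labelled transitions (labels are irrelevant here and omitted). *)
Inductive env_step : env -> env -> Prop :=
| StSend : forall D D' s p q bs Q l A S,
    D (SEP s p) = Some (ESess (Sel q bs)) ->
    D (SQ s) = Some (EQueue Q) ->
    In (l, A, S) bs ->
    D' (SEP s p) = Some (ESess S) ->
    D' (SQ s) = Some (EQueue (Q ++ [Msg p q l A])) ->
    agree_except [SEP s p; SQ s] D D' ->
    env_step D D'
| StRecv : forall D D' s p q bs Q l A S,
    D (SEP s p) = Some (ESess (Bra q bs)) ->
    D (SQ s) = Some (EQueue (Msg q p l A :: Q)) ->
    In (l, A, S) bs ->
    D' (SEP s p) = Some (ESess S) ->
    D' (SQ s) = Some (EQueue Q) ->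
    agree_except [SEP s p; SQ s] D D' ->
    env_step D D'
| StEnd : forall D D' s p,
    D (SEP s p) = Some (ESess End) ->
    D' (SEP s p) = None ->
    agree_except [SEP s p] D D' ->
    env_step D D'
| StRec : forall D Dm D' s p S,
    D (SEP s p) = Some (ESess (Mu S)) ->
    Dm (SEP s p) = Some (ESess (unfold S)) ->
    agree_except [SEP s p] D Dm ->
    env_step Dm D' ->
    env_step D D'.

Definition env_reduces (D D' : env) : Prop :=
  exists Da Db, env_equiv D Da /\ env_step Da Db /\ env_equiv Db D'.

Definition safety_property (P : env -> Prop) : Prop :=
  forall D, P D ->
    (forall s p q bs Q l B Q',
        D (SEP s p) = Some (ESess (Bra q bs)) ->
        D (SQ s) = Some (EQueue Q) ->
        qcong Q (Msg q p l B :: Q') ->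
        exists S, In (l, B, S) bs) /\
    (forall s p S D0,
        D (SEP s p) = Some (ESess (Mu S)) ->
        D0 (SEP s p) = Some (ESess (unfold S)) ->
        agree_except [SEP s p] D D0 ->
        P D0) /\
    (forall D', env_reduces D D' -> P D').

(* safe is the largest predicate satisfying the conditions. *)
Definition safe (D : env) : Prop :=
  exists P, safety_property P /\ P D.

End Env.

(* A reduction of D1 is also a reduction of D1, D2: transitions only read and
   write subjects of D1, and the congruence acts entry by entry, so D2 is an
   inert frame.  Since safety is closed under reduction (clause (iii)),
   safe (D1, D2) then gives safe (D1', D2). *)
From Stdlib Require Import List.
Import ListNotations.

Set Implicit Arguments.

Section Frame.
Variables (Role Label Pay Actor AP Tok Sess : Type).
Notation env := (env Role Label Pay Actor AP Tok Sess).

Lemma entry_equiv_refl (o : option (entry Role Label Pay)) : entry_equiv o o.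
Proof. destruct o; constructor. Qed.

Lemma env_equiv_None (D D' : env) x : env_equiv D D' -> D x = None -> D' x = None.
Proof. intros E Hx; specialize (E x); rewrite Hx in E; inversion E; reflexivity. Qed.

Lemma env_disjoint_equiv (D D' F : env) :
  env_equiv D D' -> env_disjoint D F -> env_disjoint D' F.
Proof.
  intros E Hd x; destruct (Hd x) as [Hx | Hx]; [left | right]; auto.
  exact (env_equiv_None x E Hx).
Qed.

Lemma env_equiv_union (D D' F : env) :
  env_equiv D D' -> env_equiv (env_union D F) (env_union D' F).
Proof.
  intros E x; unfold env_union; destruct (E x); try constructor; auto.
  apply entry_equiv_refl.
Qed.

Lemma agree_except_union xs (D D' F : env) :
  agree_except xs D D' -> agree_except xs (env_union D F) (env_union D' F).
Proof. intros Ha y Hy; unfold env_union; rewrite (Ha y Hy); reflexivity. Qed.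

Lemma env_disjoint_update (D Dm F : env) x0 :
  D x0 <> None -> agree_except [x0] D Dm -> env_disjoint D F -> env_disjoint Dm F.
Proof.
  intros Hx0 Ha Hd x; destruct (Hd x) as [Hx | Hx]; [| right; exact Hx].
  left; rewrite (Ha x); [exact Hx |].
  intros [<- | []]; contradiction.
Qed.

Lemma env_step_union (D D' F : env) :
  env_step D D' -> env_disjoint D F -> env_step (env_union D F) (env_union D' F).
Proof.
  intros St; induction St; intros Hd; unfold env_union.
  - eapply StSend; eauto using agree_except_union;
      [rewrite H | rewrite H0 | rewrite H2 | rewrite H3]; reflexivity.
  - eapply StRecv; eauto using agree_except_union;
      [rewrite H | rewrite H0 | rewrite H2 | rewrite H3]; reflexivity.
  - eapply StEnd; eauto using agree_except_union; [rewrite H | rewrite H0]; [reflexivity |].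
    destruct (Hd (SEP _ _ _ s p)); congruence.
  - eapply StRec with (Dm := env_union Dm F); eauto using agree_except_union;
      [rewrite H | unfold env_union; rewrite H0 |]; [reflexivity | reflexivity |].
    (* The unfolded intermediate environment differs from D only at s[p], which D owns. *)
    apply IHSt; refine (env_disjoint_update _ H1 Hd); congruence.
Qed.

Lemma env_reduces_union (D D' F : env) :
  env_reduces D D' -> env_disjoint D F -> env_reduces (env_union D F) (env_union D' F).
Proof.
  intros [Da [Db [E [St E']]]] Hd.
  exists (env_union Da F), (env_union Db F); repeat split.
  - exact (env_equiv_union F E).
  - exact (env_step_union St (env_disjoint_equiv E Hd)).
  - exact (env_equiv_union F E').
Qed.

Lemma safe_reduces (D D' : env) : safe D -> env_reduces D D' -> safe D'.
Proof.
  intros [P [HP HD]] R; exists P; split; [exact HP |].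
  exact (proj2 (proj2 (HP D HD)) D' R).
Qed.

End Frame.

Theorem lemmaB7 (Role Label Pay Actor AP Tok Sess : Type)
  (D1 D2 D1' : env Role Label Pay Actor AP Tok Sess) :
  is_env D1 -> is_env D2 -> is_env D1' ->
  env_disjoint D1 D2 -> env_disjoint D1' D2 ->
  safe (env_union D1 D2) ->
  env_reduces D1 D1' ->
  safe (env_union D1' D2).
Proof.
  intros _ _ _ Hd _ Hsafe R.
  exact (safe_reduces Hsafe (env_reduces_union R Hd)).
Qed.
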